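(* Let $n\ge 2$. The principal minor lattice $L'_n$ is minimally generated by \[\mathcal B'=\{2[in|jn] : i\neq j\in[n-1]\}\cup\{[in|in] : i\in[n-1]\}.\] Furthermore the group $L_n/L'_n$ is isomorphic to $(\mathbb{Z}/2\mathbb{Z})^{c_{n-1}}$, where $c_{n-1}=\binom{n-1}{2}$.
   Context: $[n]=\{1,\dots,n\}$. $\mathbb{Z}^{\binom{n+1}{2}}$ has standard basis $e_{ij}$, $1\le i\le j\le n$, with $e_{ij}=e_{ji}$. For $i,j,k,l\in[n]$, $[ij|kl]:=e_{ik}+e_{jl}-e_{il}-e_{jk}$ (so $[in|jn]=[jn|in]$). $V_n$ is the $n\times\binom{n+1}{2}$ integer matrix whose column indexed by $jk$ is $e_j+e_k\in\mathbb{Z}^n$, and $L_n=\ker_{\mathbb{Z}}(V_n)$. The principal minor lattice $L'_n$ is the sublattice of $\mathbb{Z}^{\binom{n+1}{2}}$ generated by the vectors $[ij|ij]$, $i,j\in[n]$ (exponent vectors of the principal $2$-minors $x_{ii}x_{jj}-x_{ij}^2$). *)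

From HB Require Import structures.
From mathcomp Require Import all_boot all_order all_algebra.
Set Implicit Arguments. Unset Strict Implicit. Unset Printing Implicit Defensive.
Import Order.TTheory GRing.Theory Num.Theory.
Local Open Scope ring_scope.

(* Index set {(i,j) : 1 <= i <= j <= n}, 0-based: ordinals i <= j in 'I_n. *)
Definition idx (n : nat) := {p : 'I_n * 'I_n | (p.1 <= p.2)%N}.

Definition vec (n : nat) := {ffun idx n -> int}.

Definition evec (n : nat) (i k : 'I_n) : vec n :=
  [ffun p : idx n => ((val p == (i, k)) || (val p == (k, i)) : nat)%:Z].

Definition brk (n : nat) (i j k l : 'I_n) : vec n :=
  evec i k + evec j l - evec i l - evec j k.

(* V_n x : the product of the n x binom(n+1,2) matrix V_n (column jk = e_j + e_k)
   with x, as a vector 'I_n -> int. *)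
Definition Vn (n : nat) (x : vec n) (i : 'I_n) : int :=
  \sum_(p : idx n) x p * ((((val p).1 == i) : nat) + (((val p).2 == i) : nat))%:Z.

Definition Ln (n : nat) (x : vec n) : Prop := forall i : 'I_n, Vn x i = 0.

Definition zspan (V : zmodType) (S : V -> Prop) (v : V) : Prop :=
  exists s : seq (int * V),
    (forall k : 'I_(size s), S (nth (0, 0) s k).2) /\
    v = \sum_(k < size s) (nth (0, 0) s k).2 *~ (nth (0, 0) s k).1.

Definition Lpn (n : nat) : vec n -> Prop :=
  zspan (fun v => exists i j : 'I_n, v = brk i j i j).

Definition min_generates (V : zmodType) (S L : V -> Prop) : Prop :=
  (forall v, zspan S v <-> L v) /\
  (forall T : V -> Prop, (forall v, T v -> S v) ->
     (forall v, zspan T v <-> L v) -> forall v, S v -> T v).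

Lemma pred_lt (n : nat) : (1 < n)%N -> (n.-1 < n)%N.
Proof. by case: n. Qed.

(* the index "n" of [n] (0-based: n.-1) *)
Definition lastI (n : nat) (h : (1 < n)%N) : 'I_n := Ordinal (pred_lt h).

Definition Bprime (n : nat) (h : (1 < n)%N) (v : vec n) : Prop :=
  (exists i j : 'I_n, [/\ i != j, (i < n.-1)%N, (j < n.-1)%N &
       v = (brk i (lastI h) j (lastI h)) *+ 2]) \/
  (exists i : 'I_n, (i < n.-1)%N /\ v = brk i (lastI h) i (lastI h)).

(* A/B ≅ G for subgroups B <= A of a Z-module V, via the first isomorphism
   theorem: a group hom A -> G, surjective, with kernel exactly B. *)
Definition quot_iso (V G : zmodType) (A B : V -> Prop) : Prop :=
  (forall v, B v -> A v) /\
  exists f : V -> G,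
    [/\ forall u v, A u -> A v -> f (u + v) = f u + f v,
        forall w, exists v, A v /\ f v = w
      & forall v, A v -> (f v = 0 <-> B v)].

(* Polarization, [ij|ij] = [in|in] + [jn|jn] - 2[in|jn], shows that B' and the
   [ij|ij] span the same lattice; each element of B' is the only one that is
   nonzero at its own coordinate (ij, resp. ii), so none of them can be dropped.
   The quotient map reads the entries x_ab, a < b < n, modulo 2.  It kills L'_n
   since [ij|ij] = e_ii + e_jj - 2e_ij, and it sends [an|bn] to the basis vector
   of ab.  Conversely, if x in L_n has these entries even, the row equation
   2x_aa + sum_(j <> a) x_aj = 0 of V_n makes every x_an even as well;
   subtracting (x_ij / 2)[ij|ij] for all i < j leaves a diagonal vector of L_n,
   and such a vector is 0. *)

From Pilot Require Import Defs.
From HB Require Import structures.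
From mathcomp Require Import all_boot all_order all_algebra.
From mathcomp Require Import zify ring.
From Stdlib Require Import Classical_Prop.
Set Implicit Arguments. Unset Strict Implicit. Unset Printing Implicit Defensive.
Import Order.TTheory GRing.Theory Num.Theory.
Local Open Scope ring_scope.

Section Subgroup.
Variable V : zmodType.
Implicit Types u v : V.

Definition subgroup (P : V -> Prop) := P 0 /\ forall u v, P u -> P v -> P (u - v).

Variable P : V -> Prop.
Hypothesis subP : subgroup P.

Lemma subgroupB u v : P u -> P v -> P (u - v).
Proof. exact: subP.2. Qed.

Lemma subgroupN v : P v -> P (- v).
Proof. by rewrite -sub0r; apply: subgroupB; case: subP. Qed.

Lemma subgroupD u v : P u -> P v -> P (u + v).
Proof. by move=> Pu Pv; rewrite -[v]opprK; apply/subgroupB/subgroupN. Qed.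

Lemma subgroupMz v z : P v -> P (v *~ z).
Proof.
case: subP => P0 _ Pv; have PMn m : P (v *+ m).
  by elim: m => [|m IH]; rewrite ?mulr0n // mulrS; apply: subgroupD.
by case: z => m; rewrite ?NegzE ?mulrNz; [|apply: subgroupN]; apply: PMn.
Qed.

Lemma subgroup_sum (I : finType) (Q : pred I) (F : I -> V) :
  (forall i, Q i -> P (F i)) -> P (\sum_(i | Q i) F i).
Proof. by move=> PF; apply: big_ind => //; [case: subP | apply: subgroupD]. Qed.

End Subgroup.

Section FfunEval.
Variables (I : finType) (M : zmodType).
Implicit Types f g : {ffun I -> M}.

Lemma ffunDE f g x : (f + g) x = f x + g x.
Proof. by rewrite ffunE. Qed.

Lemma ffunBE f g x : (f - g) x = f x - g x.
Proof. by rewrite !ffunE. Qed.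

End FfunEval.

Section Zspan.
Variable V : zmodType.
Implicit Types (P S : V -> Prop) (u v w : V).

Lemma zspan_ind S P :
  P 0 -> (forall w z u, S w -> P u -> P (w *~ z + u)) -> forall v, zspan S v -> P v.
Proof.
move=> P0 PS v [s [Ss ->]]; elim: s Ss => [|x s IH] Ss; first by rewrite big_ord0.
rewrite big_ord_recl; apply: PS; first exact: (Ss ord0).
by apply: IH => k; apply: (Ss (lift ord0 k)).
Qed.

Lemma zspan_cons S w z u : S w -> zspan S u -> zspan S (w *~ z + u).
Proof.
move=> Sw [s [Ss ->]]; exists ((z, w) :: s); split; last by rewrite big_ord_recl.
by case=> [[|k] lt_k] //=; apply: (Ss (Ordinal (lt_k : (k < size s)%N))).
Qed.

Lemma zspan0 S : zspan S 0.
Proof. by exists [::]; split => [[]|]; rewrite ?big_ord0. Qed.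

Lemma zspan_gen S w : S w -> zspan S w.
Proof. by move=> Sw; rewrite -[w]addr0 -[w]mulr1z; apply/zspan_cons/zspan0. Qed.

Lemma zspan_subgroup S : subgroup (zspan S).
Proof.
split=> [|u v]; first exact: zspan0.
have zspanN x : zspan S x -> zspan S (- x).
  move: x; apply: zspan_ind => [|w z y Sw]; first by rewrite oppr0; apply: zspan0.
  by rewrite opprD -mulrNz; apply: zspan_cons.
move=> Su Sv; move: u Su; apply: zspan_ind => [|w z y Sw Sy].
  by rewrite sub0r; apply: zspanN.
by rewrite -addrA; apply: zspan_cons.
Qed.

Lemma zspan_min S P : subgroup P -> (forall w, S w -> P w) -> forall v, zspan S v -> P v.
Proof.
move=> subP SP; apply: zspan_ind => [|w z u Sw Pu]; first by case: subP.
by apply: (subgroupD subP) => //; apply/(subgroupMz subP)/SP.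
Qed.

End Zspan.

Lemma min_generates_private (I : finType) (M : zmodType) (S L : {ffun I -> M} -> Prop) :
  (forall v, zspan S v <-> L v) ->
  (forall s, S s -> exists q, s q != 0 /\ forall w, S w -> w q != 0 -> w = s) ->
  min_generates S L.
Proof.
move=> genS private; split=> // T TS genT s Ss; apply: NNPP => Ts.
have [q [/eqP sq0 qS]] := private s Ss; apply: sq0.
have subP : subgroup (fun v : {ffun I -> M} => v q = 0).
  by split=> [|u v uq vq]; rewrite ?ffunBE ?uq ?vq ?subr0 ?ffunE.
apply: (zspan_min subP) => [w Tw | ]; last exact/genT/genS/zspan_gen.
have [// | /(qS w (TS w Tw)) ws] := eqVneq (w q) 0.
by case: Ts; rewrite -ws.
Qed.

Section Idx.
Variable n : nat.
Implicit Types (a b c d : 'I_n) (q : idx n).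

Lemma mkidx_subproof a b :
  let p := if (a <= b)%N then (a, b) else (b, a) in (p.1 <= p.2)%N.
Proof. by case: leqP => //= /ltnW. Qed.

Definition mkidx a b : idx n :=
  exist (fun p : 'I_n * 'I_n => (p.1 <= p.2)%N) _ (mkidx_subproof a b).

Lemma mkidx_le a b : (a <= b)%N -> val (mkidx a b) = (a, b).
Proof. by move=> /= ->. Qed.

Lemma mkidxC a b : mkidx a b = mkidx b a.
Proof. by apply: val_inj => /=; case: (ltngtP a b) => // /val_inj ->. Qed.

Lemma mkidx_val q : mkidx (val q).1 (val q).2 = q.
Proof. by apply: val_inj; case: q => [[a b] /= ->]. Qed.

Lemma eq_mkidx a b c d :
  (mkidx a b == mkidx c d) = (a == c) && (b == d) || (a == d) && (b == c).
Proof.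
rewrite -val_eqE /=.
case: (ltngtP a b) => h1; case: (ltngtP c d) => h2; rewrite /= !xpair_eqE -!val_eqE /=.
all: case: (eqVneq (a:nat) c) => e1; case: (eqVneq (a:nat) d) => e2;
  case: (eqVneq (b:nat) c) => e3; case: (eqVneq (b:nat) d) => e4 => //=; lia.
Qed.

Lemma evecE a b q : evec a b q = (q == mkidx a b : nat)%:Z.
Proof.
rewrite ffunE -[in RHS](mkidx_val q) eq_mkidx.
by case: q => [[c d] /= _]; rewrite !xpair_eqE.
Qed.

Lemma evecC a b : evec a b = evec b a.
Proof. by apply/ffunP => q; rewrite !evecE mkidxC. Qed.

End Idx.

Section Vn.
Variable n : nat.
Implicit Types (x y : vec n) (a b i j k l : 'I_n).

Lemma VnD x y i : Vn (x + y) i = Vn x i + Vn y i.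
Proof. by rewrite /Vn -big_split; apply: eq_bigr => p _; rewrite ffunE mulrDl. Qed.

Lemma VnB x y i : Vn (x - y) i = Vn x i - Vn y i.
Proof. by rewrite /Vn -sumrB; apply: eq_bigr => p _; rewrite !ffunE mulrBl. Qed.

Lemma Ln_subgroup : subgroup (@Ln n).
Proof.
split=> [i | x y Lx Ly i]; last by rewrite VnB Lx Ly subr0.
by rewrite /Vn big1 // => p _; rewrite ffunE mul0r.
Qed.

Lemma Vn_evec a b i : Vn (evec a b) i = (a == i : nat)%:Z + (b == i : nat)%:Z.
Proof.
rewrite /Vn (bigD1 (mkidx a b)) //= big1 => [|p /negbTE p_ab]; last first.
  by rewrite evecE p_ab mul0r.
by rewrite evecE eqxx mul1r addr0 /=; case: leqP => _ //=; rewrite addrC.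
Qed.

Lemma Ln_brk i j k l : Ln (brk i j k l).
Proof. by move=> m; rewrite /brk !VnB VnD !Vn_evec; ring. Qed.

Lemma Lpn_Ln x : Lpn x -> Ln x.
Proof. by apply: (zspan_min Ln_subgroup) => _ [i [j ->]]; apply: Ln_brk. Qed.

Lemma Lpn_subgroup : subgroup (@Lpn n).
Proof. exact: zspan_subgroup. Qed.

Lemma Lpn_brk i j : Lpn (brk i j i j).
Proof. by apply: zspan_gen; exists i, j. Qed.

Lemma Vn_row x i : Vn x i = x (mkidx i i) + \sum_j x (mkidx i j).
Proof.
have coordE q : x q = \sum_p x p * (p == q : nat)%:Z.
  by rewrite (bigD1 q) //= eqxx mulr1 big1 ?addr0 // => p /negbTE->; rewrite mulr0.
rewrite /Vn coordE (eq_bigr _ (fun j _ => coordE (mkidx i j))) exchange_big -big_split /=.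
apply: eq_bigr => p _; rewrite -mulr_sumr -mulrDr; congr (_ * _).
under eq_bigr do rewrite -natz.
rewrite -!natz -natr_sum -natrD; congr (_%:R).
have sum1 c : (\sum_j (c == j : nat) = 1)%N.
  by rewrite (bigD1 c) //= eqxx big1 // => j; rewrite eq_sym => /negbTE->.
rewrite -[in RHS](mkidx_val p); case: p => [[s t] _] /=.
under eq_bigr do rewrite eq_mkidx.
rewrite eq_mkidx.
case: (eqVneq s i) => [->|nsi]; case: (eqVneq t i) => [->|nti] /=.
- by under eq_bigr do rewrite andbT orbb; rewrite sum1.
- by under eq_bigr do rewrite andbF orbF; rewrite sum1.
- by under eq_bigr do rewrite andbT; rewrite sum1.
- by rewrite big1 // => j; rewrite andbF.
Qed.

End Vn.

Section Brk.
Variable n : nat.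
Implicit Types (a b c i j k l : 'I_n).

Lemma brk_idl i k l : brk i i k l = 0.
Proof. by rewrite /brk addrK subrr. Qed.

Lemma brk_idr i j k : brk i j k k = 0.
Proof. by rewrite /brk addrAC addrK subrr. Qed.

Lemma brkC i j c : brk i c j c = brk j c i c.
Proof. by rewrite /brk (evecC i j) (evecC c i) (evecC c j) addrAC. Qed.

Lemma brk_diag i j : brk i j i j = evec i i + evec j j - evec i j *+ 2.
Proof. by rewrite /brk (evecC j i) mulr2n opprD addrA. Qed.

Lemma brk_polarization i j c :
  brk i j i j = brk i c i c + brk j c j c - brk i c j c *+ 2.
Proof.
rewrite !brk_diag /brk (evecC c j).
by apply/ffunP => q; rewrite !(ffunE, ffunMnE); ring.
Qed.

Definition offdiag (q : idx n) := (val q).1 != (val q).2.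

Lemma offdiag_mkidx a b : offdiag (mkidx a b) = (a != b).
Proof. by rewrite /offdiag /=; case: leqP => _ //=; rewrite eq_sym. Qed.

Lemma brk_diag_offdiag i j a b :
  a != b -> brk i j i j (mkidx a b) = - 2 * (mkidx a b == mkidx i j : nat)%:Z.
Proof.
move=> /negbTE ab; rewrite brk_diag ffunBE ffunDE ffunMnE !evecE !eq_mkidx.
have ab_c c : (a == c) && (b == c) = false.
  by apply/negbTE; apply: contraFN ab => /andP [/eqP -> /eqP ->].
by rewrite !ab_c /=; lia.
Qed.

Lemma brk_coord_away i j c a b :
  a != c -> b != c -> brk i c j c (mkidx a b) = evec i j (mkidx a b).
Proof.
move=> /negbTE ac /negbTE bc.
by rewrite /brk !ffunBE ffunDE !evecE !eq_mkidx ac bc !andbF /= addr0 !subr0.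
Qed.

End Brk.

Section Kernel.
Variable n : nat.
Implicit Types (x : vec n) (a b c : 'I_n).

Lemma Ln_offdiag_eq0 x :
  Ln x -> (forall a b, a != b -> x (mkidx a b) = 0) -> x = 0.
Proof.
move=> Lx x_off; apply/ffunP => q; rewrite ffunE -(mkidx_val q).
case: (eqVneq (val q).1 (val q).2) => [-> | ]; last exact: x_off.
have := Lx (val q).2; rewrite Vn_row (bigD1 (val q).2) //= big1 => [|b b_ne].
  by move/eqP; rewrite addr0 -mulr2n mulrn_eq0 => /eqP.
by rewrite x_off // eq_sym.
Qed.

Lemma Ln_offdiag_even c x :
  Ln x -> (forall a b, a != b -> a != c -> b != c -> (2 %| x (mkidx a b))%Z) ->
  forall a b, a != b -> (2 %| x (mkidx a b))%Z.
Proof.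
move=> Lx x_off.
have x_ac a : a != c -> (2 %| x (mkidx a c))%Z.
  move=> ac; have : (2 %| Vn x a)%Z by rewrite Lx rpred0.
  rewrite Vn_row (bigD1 a) //= addrA (bigD1 c) 1?eq_sym //= rpredDl; last first.
    by apply/dvdzP; exists (x (mkidx a a)); rewrite mulr_natr mulr2n.
  rewrite rpredDr // rpred_sum // => b /andP [ba bc].
  by apply: x_off; rewrite // eq_sym.
move=> a b; have [-> | ac] := eqVneq a c => ab.
  by rewrite mkidxC x_ac // eq_sym.
by have [-> | bc] := eqVneq b c; [apply: x_ac | apply: x_off].
Qed.

Lemma Lpn_offdiag_even x :
  Ln x -> (forall a b, a != b -> (2 %| x (mkidx a b))%Z) -> Lpn x.
Proof.
move=> Lx x_even; have Lpn_sub := @Lpn_subgroup n.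
pose s := \sum_(q | offdiag q)
  brk (val q).1 (val q).2 (val q).1 (val q).2 *~ (x q %/ 2)%Z.
have Lpn_s : Lpn s.
  apply: (subgroup_sum Lpn_sub) => q _; apply: (subgroupMz Lpn_sub).
  exact: Lpn_brk.
suff /eqP : x + s = 0 by rewrite addr_eq0 => /eqP ->; apply: (subgroupN Lpn_sub).
apply: Ln_offdiag_eq0 => [|a b ab].
  exact: (subgroupD (@Ln_subgroup n)) Lx (Lpn_Ln Lpn_s).
rewrite ffunDE sum_ffunE (bigD1 (mkidx a b)) ?offdiag_mkidx //.
rewrite big1 => [|q /andP [_ q_ab]].
  rewrite ffunMzE brk_diag_offdiag // mkidx_val eqxx /= addr0.
  by rewrite -{1}(divzK (x_even a b ab)) mulrzz; ring.
by rewrite ffunMzE brk_diag_offdiag // mkidx_val eq_sym (negbTE q_ab) mulr0 mul0rz.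
Qed.

End Kernel.

Section Generators.
Variables (n : nat) (hn : (1 < n)%N).
Implicit Types (a b i j k l : 'I_n).
Let L := Defs.lastI hn.

Lemma lt_lastI i : (i < n.-1)%N = (i != L).
Proof. by rewrite -val_eqE /=; have := ltn_ord i; lia. Qed.

Definition bgen i j := brk i L j L *+ (1 + (i != j)).

Lemma BprimeP v : Bprime hn v <-> exists i j, [/\ i != L, j != L & v = bgen i j].
Proof.
rewrite /bgen; split.
  case=> [[i [j [ij iL jL ->]]] | [i [iL ->]]]; [exists i, j | exists i, i].
    by rewrite ij -!lt_lastI.
  by rewrite eqxx -lt_lastI.
case=> i [j [iL jL ->]]; have [<- | ij] := eqVneq i j.
  by right; exists i; rewrite lt_lastI.
by left; exists i, j; rewrite !lt_lastI.
Qed.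

Lemma bgenC i j : bgen i j = bgen j i.
Proof. by rewrite /bgen brkC eq_sym. Qed.

Lemma bgen_coord i j a b : a != L -> b != L ->
  bgen i j (mkidx a b) = (mkidx a b == mkidx i j : nat)%:Z *+ (1 + (i != j)).
Proof. by move=> aL bL; rewrite ffunMnE brk_coord_away // evecE. Qed.

Lemma Bprime_private v : Bprime hn v ->
  exists q, v q != 0 /\ forall w, Bprime hn w -> w q != 0 -> w = v.
Proof.
move=> /BprimeP [i [j [iL jL ->]]]; exists (mkidx i j).
rewrite bgen_coord // eqxx /= pnatr_eq0; split=> // w /BprimeP [k [l [kL lL ->]]].
rewrite bgen_coord //; have [e _ | _] := eqVneq (mkidx i j) (mkidx k l); last first.
  by rewrite /= mul0rn eqxx.
by move/eqP: e; rewrite eq_mkidx => /orP [] /andP [/eqP-> /eqP->]; rewrite // bgenC.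
Qed.

Lemma bgen_Lpn i j : Lpn (bgen i j).
Proof.
have Lpn_sub := @Lpn_subgroup n.
rewrite /bgen; have [<- | ij] := eqVneq i j; first by rewrite mulr1n; apply: Lpn_brk.
have -> : brk i L j L *+ 2 = brk i L i L + brk j L j L - brk i j i j.
  by rewrite (brk_polarization i j L) opprB addrC subrK.
by apply: (subgroupB Lpn_sub); [apply: (subgroupD Lpn_sub) |]; apply: Lpn_brk.
Qed.

Lemma brkL_span i j : zspan (Bprime hn) (brk i L j L *+ (1 + (i != j))).
Proof.
have [-> | iL] := eqVneq i L; first by rewrite brk_idl mul0rn; apply: zspan0.
have [-> | jL] := eqVneq j L; first by rewrite brk_idr mul0rn; apply: zspan0.
by apply/zspan_gen/BprimeP; exists i, j.
Qed.

Lemma brk_span i j : zspan (Bprime hn) (brk i j i j).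
Proof.
have span_sub := zspan_subgroup (Bprime hn).
have brk_ii k : zspan (Bprime hn) (brk k L k L).
  by have := brkL_span k k; rewrite eqxx mulr1n.
rewrite (brk_polarization i j L); apply: (subgroupB span_sub).
  exact: (subgroupD span_sub).
have [<- | ij] := eqVneq i j; last by have := brkL_span i j; rewrite ij.
by rewrite mulr2n; apply: (subgroupD span_sub).
Qed.

Lemma Bprime_generates v : zspan (Bprime hn) v <-> Lpn v.
Proof.
split; apply: zspan_min => [|w].
- exact: Lpn_subgroup.
- by case/BprimeP => i [j [_ _ ->]]; apply: bgen_Lpn.
- exact: zspan_subgroup.
- by case=> i [j ->]; apply: brk_span.
Qed.

End Generators.

Section LtPairs.
Variable m : nat.

Let sorted_pairs := [set t : 2.-tuple 'I_m | sorted ltn (map val t)].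

Let card_sorted : #|sorted_pairs| = 'C(m, 2) := card_ltn_sorted_tuples 2 m.

Definition ltpair (k : 'I_('C(m, 2))) : 'I_m * 'I_m :=
  let t := enum_val (cast_ord (esym card_sorted) k) in (tnth t ord0, tnth t ord_max).

Lemma ltpair_lt k : ((ltpair k).1 < (ltpair k).2)%N.
Proof.
rewrite /ltpair; move: (enum_valP (cast_ord (esym card_sorted) k)).
move: (enum_val _) => t; rewrite inE; case/tupleP: t => x t; case/tupleP: t => y t.
by rewrite (tuple0 t) /= andbT.
Qed.

Lemma ltpair_inj : injective ltpair.
Proof.
move=> k k' [e0 e1].
suff /enum_val_inj/cast_ord_inj : enum_val (cast_ord (esym card_sorted) k) =
                                  enum_val (cast_ord (esym card_sorted) k') by [].
apply: eq_from_tnth => -[[|[|i]] lt_i2] //.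
  by rewrite (_ : Ordinal lt_i2 = ord0) //; apply: val_inj.
by rewrite (_ : Ordinal lt_i2 = ord_max) //; apply: val_inj.
Qed.

Lemma ltpair_surj (a b : 'I_m) : (a < b)%N -> exists k, ltpair k = (a, b).
Proof.
move=> ab; pose t := [tuple a; b].
have t_sorted : t \in sorted_pairs by rewrite inE /= ab.
exists (cast_ord card_sorted (enum_rank_in t_sorted t)).
by rewrite /ltpair cast_ordK enum_rankK_in.
Qed.

End LtPairs.

Lemma dvdz2_Z2 (z : int) : (2 %| z)%Z = (z%:~R == 0 :> 'Z_2).
Proof. exact/dvdz_pcharf/pchar_Fp. Qed.

Section Parity.
Variables (n : nat) (hn : (1 < n)%N).
Implicit Types (x : vec n) (a b i j : 'I_n).
Let L := Defs.lastI hn.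
Let C := 'C(n.-1, 2).

Definition parity_pair (k : 'I_C) : 'I_n * 'I_n :=
  (widen_ord (leq_pred n) (ltpair k).1, widen_ord (leq_pred n) (ltpair k).2).

Definition parity_idx k := mkidx (parity_pair k).1 (parity_pair k).2.

Definition parity x : 'rV['Z_2]_C := \row_k (x (parity_idx k))%:~R.

Lemma parity_pairP k : [/\ (parity_pair k).1 != (parity_pair k).2,
  (parity_pair k).1 != L & (parity_pair k).2 != L].
Proof.
rewrite -!(lt_lastI hn) -val_eqE /= neq_ltn ltpair_lt.
by case: (ltpair k) => a b; rewrite !ltn_ord.
Qed.

Lemma parity_idx_inj : injective parity_idx.
Proof.
have le_pair k : ((parity_pair k).1 <= (parity_pair k).2)%N by apply/ltnW/ltpair_lt.
move=> k k' /(congr1 val); rewrite !mkidx_le // => -[ea eb].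
apply: ltpair_inj; rewrite [ltpair k]surjective_pairing [ltpair k']surjective_pairing.
by congr pair; apply: val_inj; [exact: ea | exact: eb].
Qed.

Lemma parity_idx_surj a b :
  a != b -> a != L -> b != L -> exists k, parity_idx k = mkidx a b.
Proof.
wlog ab : a b / (a < b)%N.
  move=> wlog_ab; case: (ltngtP a b) => [ab | ba | /val_inj ->]; last by rewrite eqxx.
  - exact: wlog_ab.
  - by rewrite mkidxC => *; apply: wlog_ab; rewrite // eq_sym.
rewrite -!(lt_lastI hn) => _ a_lt b_lt.
have [k pk] := ltpair_surj (a := Ordinal a_lt) (b := Ordinal b_lt) ab.
by exists k; rewrite /parity_idx /parity_pair pk; congr mkidx; apply: val_inj.
Qed.

Lemma evec_parity k k' :
  evec (parity_pair k').1 (parity_pair k').2 (parity_idx k) = (k == k' : nat)%:Z.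
Proof. by rewrite evecE (inj_eq parity_idx_inj). Qed.

Lemma parityD x y : parity (x + y) = parity x + parity y.
Proof. by apply/rowP => k; rewrite !mxE ffunDE intrD. Qed.

Lemma parityB x y : parity (x - y) = parity x - parity y.
Proof. by apply/rowP => k; rewrite !mxE ffunBE intrB. Qed.

Lemma parity_brk i j : parity (brk i j i j) = 0.
Proof.
apply/rowP => k; have [ne _ _] := parity_pairP k.
rewrite !mxE brk_diag_offdiag // intrM (_ : (-2)%:~R = 0) ?mul0r //.
by apply/eqP; rewrite -dvdz2_Z2.
Qed.

Lemma Lpn_parity x : Lpn x -> parity x = 0.
Proof.
move: x; apply: zspan_min => [|_ [i [j ->]]]; last exact: parity_brk.
split=> [|u v pu pv]; last by rewrite parityB pu pv subr0.
by apply/rowP => k; rewrite !mxE ffunE.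
Qed.

Lemma parity_surj w : exists x, Ln x /\ parity x = w.
Proof.
exists (\sum_k brk (parity_pair k).1 L (parity_pair k).2 L *~ (w 0 k : nat)); split.
  apply: (subgroup_sum (@Ln_subgroup n)) => k _.
  by apply: (subgroupMz (@Ln_subgroup n)); apply: Ln_brk.
apply/rowP => k; have [_ kL1 kL2] := parity_pairP k.
rewrite !mxE sum_ffunE (bigD1 k) //= big1 => [|k' k'k]; last first.
  by rewrite ffunMzE brk_coord_away // evec_parity eq_sym (negbTE k'k) mul0rz.
by rewrite ffunMzE brk_coord_away // evec_parity eqxx /= addr0 intz -pmulrn natr_Zp.
Qed.

Lemma parity_ker x : Ln x -> parity x = 0 -> Lpn x.
Proof.
move=> Lx /rowP x_even; apply: Lpn_offdiag_even => //.
apply: (Ln_offdiag_even (c := L)) => // a b ab aL bL.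
have [k <-] := parity_idx_surj ab aL bL.
by have := x_even k; rewrite !mxE dvdz2_Z2 => ->.
Qed.

End Parity.

Theorem proposition2p3 (n : nat) (hn : (1 < n)%N) :
  min_generates (Bprime hn) (@Lpn n) /\
  quot_iso 'rV['Z_2]_('C(n.-1, 2)) (@Ln n) (@Lpn n).
Proof.
split.
  by apply: min_generates_private; [apply: Bprime_generates | apply: Bprime_private].
split; first exact: Lpn_Ln.
exists (@parity n); split.
- by move=> x y _ _; apply: parityD.
- exact: parity_surj.
- by move=> x Lx; split; [apply: parity_ker | apply: Lpn_parity].
Qed.
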